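(* Let $\boldsymbol\gamma\in(0,\infty)^B$, $P>0$, and parameters $0<\alpha<\beta$, $\kappa>0$, $a\in\mathbb R$ with $\kappa\log_2\alpha+a=\log_2(1+\alpha)$ and $\kappa(1+\alpha)\le\alpha$. Define \[ I^{\rm ref}(\rho)=\begin{cases}\log_2(1+\rho),&0\le\rho\le\alpha,\\ \kappa\log_2\rho+a,&\alpha<\rho\le\beta,\\ \kappa\log_2\beta+a,&\rho>\beta.\end{cases} \] A solution of maximizing $\sum_{b=1}^B I^{\rm ref}(p_b\gamma_b)$ subject to $\sum_{b=1}^B p_b\le BP$, $p_b\ge0$, is: $p^{\rm ref}_b=\beta/\gamma_b$ for all $b$ if $\frac1B\sum_b\beta/\gamma_b<P$; otherwise \[ p^{\rm ref}_b=\begin{cases}\beta/\gamma_b,&\eta\ge\frac{\beta}{\kappa\gamma_b},\\ \kappa\eta,&\frac{\alpha}{\kappa\gamma_b}\le\eta<\frac{\beta}{\kappa\gamma_b},\\ \alpha/\gamma_b,&\frac{\alpha+1}{\gamma_b}\le\eta<\frac{\alpha}{\kappa\gamma_b},\\ \eta-1/\gamma_b,&\frac1{\gamma_b}\le\eta<\frac{\alpha+1}{\gamma_b},\\ 0,&\text{otherwise},\end{cases} \] for $b=1,\dots,B$, where $\eta$ is chosen such that $\frac1B\sum_{b=1}^B p^{\rm ref}_b=P$.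
   Context: The function $I^{\rm ref}$ is a piecewise approximation (refined truncated water-filling) of a discrete-input mutual information curve; the condition $\kappa(1+\alpha)\le\alpha$ ensures that the slope of $I^{\rm ref}$ does not increase at $\rho=\alpha$. *)

From Stdlib Require Import Reals Lra.
Open Scope R_scope.

Definition log2 (x : R) : R := ln x / ln 2.

(* sumB B f = f 0 + f 1 + ... + f (B-1)  (bands indexed 0..B-1) *)
Fixpoint sumB (B : nat) (f : nat -> R) : R :=
  match B with
  | O => 0
  | S n => sumB n f + f n
  end.

Definition Iref (alpha beta kappa a rho : R) : R :=
  if Rle_dec rho alpha then log2 (1 + rho)
  else if Rle_dec rho beta then kappa * log2 rho + a
  else kappa * log2 beta + a.

Definition objective (B : nat) (alpha beta kappa a : R) (gamma p : nat -> R) : R :=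
  sumB B (fun b => Iref alpha beta kappa a (p b * gamma b)).

Definition feasible (B : nat) (P : R) (p : nat -> R) : Prop :=
  (forall b, (b < B)%nat -> 0 <= p b) /\ sumB B p <= INR B * P.

Definition is_solution (B : nat) (P alpha beta kappa a : R) (gamma p : nat -> R) : Prop :=
  feasible B P p /\
  forall q, feasible B P q ->
    objective B alpha beta kappa a gamma q <= objective B alpha beta kappa a gamma p.

(* The water-level allocation p^ref_b(eta), conditions tested in the paper's order. *)
Definition pref (alpha beta kappa eta : R) (gamma : nat -> R) (b : nat) : R :=
  let g := gamma b in
  if Rle_dec (beta / (kappa * g)) eta then beta / g
  else if Rle_dec (alpha / (kappa * g)) eta then kappa * eta
  else if Rle_dec ((alpha + 1) / g) eta then alpha / g
  else if Rle_dec (1 / g) eta then eta - 1 / g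
  else 0.

(* Measured in nats, the per-band reward G = ln 2 * I^ref is concave on
   [0, oo): it follows ln(1 + x) up to alpha, kappa ln x + const up to beta,
   and is flat afterwards; the slope condition kappa (1 + alpha) <= alpha says
   that the slope kappa/alpha just after the kink at alpha does not exceed the
   slope 1/(1 + alpha) just before it.  We prove by tangent-line estimates that
   G has the expected supergradients at every point, and deduce that at the
   normalized water level t = eta * gamma_b the allocation p^ref_b(eta) puts the
   received SNR at a point where 1/t is a supergradient of G.  Summing these
   tangent bounds over the bands is a Lagrangian (weak duality) argument: any
   feasible q has objective at most that of p^ref as soon as p^ref spends the
   whole budget.  A water level spending the budget exists by the intermediate
   value theorem, since eta |-> sum_b p^ref_b(eta) is Lipschitz, vanishes at 0
   and reaches sum_b beta/gamma_b.  When even that does not exhaust the budget,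
   every band is saturated at the global maximum point beta of G. *)

From Stdlib Require Import Reals Lra Lia Psatz.
Open Scope R_scope.

Lemma ln_tangent u v : 0 < u -> 0 < v -> ln u <= ln v + (u - v) / v.
Proof.
  intros Hu Hv.
  assert (H := exp_ineq1_le (ln (u / v))).
  rewrite exp_ln in H by (apply Rdiv_lt_0_compat; auto).
  unfold Rdiv in *.
  rewrite ln_mult, ln_Rinv in H by (auto; apply Rinv_0_lt_compat; auto).
  assert ((u - v) * / v = u * / v - 1) by (field; lra). lra.
Qed.

Lemma ln_le u v : 0 < u -> u <= v -> ln u <= ln v.
Proof.
  intros Hu Huv. destruct (Req_dec u v) as [<- | Hne]; [lra |].
  apply Rlt_le, ln_increasing; lra.
Qed.

Lemma ln2_pos : 0 < ln 2.
Proof. pose proof ln_lt_2; lra. Qed.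

Lemma ratio_le_inv c d t : 0 < d -> 0 < t -> c * t <= d -> c / d <= / t.
Proof.
  intros Hd Ht H. apply Rmult_le_reg_r with (r := d * t); [nra |].
  replace (c / d * (d * t)) with (c * t) by (field; lra).
  replace (/ t * (d * t)) with d by (field; lra). lra.
Qed.

Lemma inv_le_ratio c d t : 0 < d -> 0 < t -> d <= c * t -> / t <= c / d.
Proof.
  intros Hd Ht H. apply Rmult_le_reg_r with (r := d * t); [nra |].
  replace (c / d * (d * t)) with (c * t) by (field; lra).
  replace (/ t * (d * t)) with d by (field; lra). lra.
Qed.

Lemma div_le_iff c d e : 0 < d -> (c / d <= e <-> c <= e * d).
Proof.
  intros Hd. split; intros H.
  - apply Rmult_le_compat_r with (r := d) in H; [| lra].
    replace (c / d * d) with c in H by (field; lra). exact H.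
  - apply Rmult_le_reg_r with (r := d); [lra |].
    replace (c / d * d) with c by (field; lra). exact H.
Qed.

Definition supergradient (f : R -> R) (y s : R) : Prop :=
  forall x, 0 <= x -> f x <= f y + s * (x - y).

Lemma supergradient_between f y sL sR s :
  supergradient f y sL -> supergradient f y sR -> sR <= s <= sL ->
  supergradient f y s.
Proof.
  intros HL HR Hs x Hx. specialize (HL x Hx). specialize (HR x Hx).
  destruct (Rle_dec x y); nra.
Qed.

Lemma supergradient_at_zero f s1 s :
  supergradient f 0 s1 -> s1 <= s -> supergradient f 0 s.
Proof. intros H Hs x Hx. specialize (H x Hx). nra. Qed.

Definition nat_rate (alpha beta kappa a x : R) : R :=
  ln 2 * Iref alpha beta kappa a x.

(* The received SNR p_b * gamma_b chosen at normalized water level t. *)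
Definition response (alpha beta kappa t : R) : R :=
  if Rle_dec beta (kappa * t) then beta
  else if Rle_dec alpha (kappa * t) then kappa * t
  else if Rle_dec (alpha + 1) t then alpha
  else if Rle_dec 1 t then t - 1
  else 0.

Section Concavity.
Variables al be ka a : R.
Hypothesis Hal : 0 < al.
Hypothesis Hab : al < be.
Hypothesis Hka : 0 < ka.
Hypothesis Ha : ka * log2 al + a = log2 (1 + al).
Hypothesis Hslope : ka * (1 + al) <= al.

Local Notation G := (nat_rate al be ka a).

Lemma rate_low x : x <= al -> G x = ln (1 + x).
Proof.
  intros Hx. pose proof ln2_pos. unfold nat_rate, Iref, log2.
  destruct (Rle_dec x al); [field; lra | lra].
Qed.

(* Continuity at the kink is exactly the hypothesis on a. *)
Lemma rate_mid y : al <= y <= be -> G y = ka * ln y + a * ln 2.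
Proof.
  intros Hy. pose proof ln2_pos. unfold nat_rate, Iref.
  destruct (Rle_dec y al).
  - replace y with al by lra. rewrite <- Ha. unfold log2. field. lra.
  - destruct (Rle_dec y be); [unfold log2; field; lra | lra].
Qed.

Lemma rate_high x : be < x -> G x = ka * ln be + a * ln 2.
Proof.
  intros Hx. pose proof ln2_pos. unfold nat_rate, Iref.
  destruct (Rle_dec x al); [lra |].
  destruct (Rle_dec x be); [lra | unfold log2; field; lra].
Qed.

Lemma kink_slopes : ka / al <= / (1 + al).
Proof. apply ratio_le_inv; lra. Qed.

Lemma rate_low_tangent x y :
  0 <= x <= al -> 0 <= y <= al -> G x <= G y + / (1 + y) * (x - y).
Proof.
  intros Hx Hy. rewrite !rate_low by lra.
  pose proof (ln_tangent (1 + x) (1 + y) ltac:(lra) ltac:(lra)).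
  unfold Rdiv in *. lra.
Qed.

Lemma rate_mid_tangent x y :
  al <= x <= be -> al <= y <= be -> G x <= G y + ka / y * (x - y).
Proof.
  intros Hx Hy. rewrite !rate_mid by lra.
  pose proof (ln_tangent x y ltac:(lra) ltac:(lra)).
  assert (ka * ln x <= ka * (ln y + (x - y) / y)) by (apply Rmult_le_compat_l; lra).
  unfold Rdiv in *. lra.
Qed.

Lemma rate_le_top x : 0 <= x -> G x <= G be.
Proof.
  intros Hx. rewrite (rate_mid be) by lra.
  assert (Hmono : forall y, al <= y <= be -> ka * ln y <= ka * ln be).
  { intros y Hy. apply Rmult_le_compat_l; [lra | apply ln_le; lra]. }
  destruct (Rle_dec x al).
  - rewrite rate_low by lra.
    pose proof (ln_le (1 + x) (1 + al) ltac:(lra) ltac:(lra)).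
    pose proof (rate_mid al ltac:(lra)). rewrite rate_low in H0 by lra.
    pose proof (Hmono al ltac:(lra)). lra.
  - destruct (Rle_dec x be).
    + rewrite rate_mid by lra. pose proof (Hmono x ltac:(lra)). lra.
    + rewrite rate_high by lra. lra.
Qed.

Lemma supergradient_mid y : al <= y <= be -> supergradient G y (ka / y).
Proof.
  intros Hy x Hx.
  assert (Hs : 0 < ka / y) by (apply Rdiv_lt_0_compat; lra).
  destruct (Rle_dec x al).
  - assert (Hsl : ka / y <= / (1 + al)).
    { eapply Rle_trans; [| apply kink_slopes].
      apply Rmult_le_compat_l; [lra | apply Rinv_le_contravar; lra]. }
    pose proof (rate_low_tangent x al ltac:(lra) ltac:(lra)).
    pose proof (rate_mid_tangent al y ltac:(lra) Hy).
    assert ((/ (1 + al) - ka / y) * (al - x) >= 0) by nra. nra.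
  - destruct (Rle_dec x be).
    + apply rate_mid_tangent; lra.
    + rewrite rate_high by lra. rewrite <- (rate_mid be) by lra.
      pose proof (rate_mid_tangent be y ltac:(lra) Hy). nra.
Qed.

Lemma supergradient_low y : 0 <= y <= al -> supergradient G y (/ (1 + y)).
Proof.
  intros Hy x Hx.
  destruct (Rle_dec x al); [apply rate_low_tangent; lra |].
  assert (Hs : ka / al <= / (1 + y)).
  { eapply Rle_trans; [apply kink_slopes | apply Rinv_le_contravar; lra]. }
  pose proof (supergradient_mid al ltac:(lra) x Hx).
  pose proof (rate_low_tangent al y ltac:(lra) Hy). nra.
Qed.

Lemma supergradient_kink s : ka / al <= s <= / (1 + al) -> supergradient G al s.
Proof.
  intros Hs. apply (supergradient_between _ _ (/ (1 + al)) (ka / al)); auto.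
  - apply supergradient_low; lra.
  - apply supergradient_mid; lra.
Qed.

Lemma supergradient_top s : 0 <= s <= ka / be -> supergradient G be s.
Proof.
  intros Hs. apply (supergradient_between _ _ (ka / be) 0); auto.
  - apply supergradient_mid; lra.
  - intros x Hx. rewrite Rmult_0_l, Rplus_0_r. apply rate_le_top; exact Hx.
Qed.

Lemma supergradient_zero s : 1 <= s -> supergradient G 0 s.
Proof.
  intros Hs. apply (supergradient_at_zero _ (/ (1 + 0))).
  - apply supergradient_low; lra.
  - rewrite Rplus_0_r, Rinv_1. exact Hs.
Qed.

Lemma response_supergradient t : 0 < t -> supergradient G (response al be ka t) (/ t).
Proof.
  intros Ht. assert (0 < / t) by (apply Rinv_0_lt_compat; lra).
  unfold response.
  destruct (Rle_dec be (ka * t)).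
  { apply supergradient_top. split; [lra | apply inv_le_ratio; lra]. }
  destruct (Rle_dec al (ka * t)).
  { replace (/ t) with (ka / (ka * t)) by (field; lra). apply supergradient_mid; lra. }
  destruct (Rle_dec (al + 1) t).
  { apply supergradient_kink. split.
    - apply ratio_le_inv; lra.
    - apply Rinv_le_contravar; lra. }
  destruct (Rle_dec 1 t).
  { replace (/ t) with (/ (1 + (t - 1))) by (f_equal; ring). apply supergradient_low; lra. }
  apply supergradient_zero.
  rewrite <- Rinv_1. apply Rinv_le_contravar; lra.
Qed.

End Concavity.

Section Allocation.
Variables al be ka : R.
Hypothesis Hal : 0 < al.
Hypothesis Hab : al < be.
Hypothesis Hka : 0 < ka.
Hypothesis Hslope : ka * (1 + al) <= al.

Lemma pref_response eta (gamma : nat -> R) b : 0 < gamma b ->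
  pref al be ka eta gamma b = response al be ka (eta * gamma b) / gamma b.
Proof.
  intros Hg. unfold pref, response. cbv zeta.
  set (g := gamma b) in *.
  assert (I1 : be / (ka * g) <= eta <-> be <= ka * (eta * g)).
  { rewrite div_le_iff by nra. replace (eta * (ka * g)) with (ka * (eta * g)) by ring. tauto. }
  assert (I2 : al / (ka * g) <= eta <-> al <= ka * (eta * g)).
  { rewrite div_le_iff by nra. replace (eta * (ka * g)) with (ka * (eta * g)) by ring. tauto. }
  assert (I3 : (al + 1) / g <= eta <-> al + 1 <= eta * g) by (apply div_le_iff; lra).
  assert (I4 : 1 / g <= eta <-> 1 <= eta * g) by (apply div_le_iff; lra).
  repeat match goal with |- context [Rle_dec ?x ?y] => destruct (Rle_dec x y) end;
  try (exfalso; tauto); field; lra.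
Qed.

Lemma response_nonneg t : 0 <= response al be ka t.
Proof. unfold response. repeat destruct Rle_dec; lra. Qed.

Lemma response_nonpos_level t : t <= 0 -> response al be ka t = 0.
Proof.
  intros Ht. assert (ka * t <= 0) by nra.
  unfold response. repeat destruct Rle_dec; lra.
Qed.

Definition clamp (c u : R) : R := Rmin c (Rmax 0 u).

(* The response is the sum of two clipped ramps, one per regime; the slope
   condition makes the second ramp start only after the first has saturated. *)
Lemma response_clamp t :
  response al be ka t = clamp al (t - 1) + clamp (be - al) (ka * t - al).
Proof.
  unfold response, clamp, Rmin, Rmax.
  destruct (Rle_dec (al + 1) t).
  - repeat destruct Rle_dec; lra.
  - assert (ka * t < al) by nra. repeat destruct Rle_dec; lra.
Qed.

Lemma clamp_lipschitz c u v : 0 <= c -> Rabs (clamp c u - clamp c v) <= Rabs (u - v).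
Proof.
  intros. unfold clamp, Rmin, Rmax, Rabs.
  repeat destruct Rle_dec; repeat destruct Rcase_abs; lra.
Qed.

Lemma response_lipschitz t s :
  Rabs (response al be ka t - response al be ka s) <= (1 + ka) * Rabs (t - s).
Proof.
  rewrite !response_clamp.
  pose proof (clamp_lipschitz al (t - 1) (s - 1) ltac:(lra)) as H1.
  pose proof (clamp_lipschitz (be - al) (ka * t - al) (ka * s - al) ltac:(lra)) as H2.
  replace (t - 1 - (s - 1)) with (t - s) in H1 by ring.
  replace (ka * t - al - (ka * s - al)) with (ka * (t - s)) in H2 by ring.
  rewrite Rabs_mult, (Rabs_pos_eq ka) in H2 by lra.
  set (d1 := clamp al (t - 1) - clamp al (s - 1)) in H1.
  set (d2 := clamp (be - al) (ka * t - al) - clamp (be - al) (ka * s - al)) in H2.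
  replace (_ - _) with (d1 + d2) by (unfold d1, d2; ring).
  pose proof (Rabs_triang d1 d2). lra.
Qed.

Lemma pref_lipschitz (gamma : nat -> R) b e1 e2 : 0 < gamma b ->
  Rabs (pref al be ka e1 gamma b - pref al be ka e2 gamma b) <= (1 + ka) * Rabs (e1 - e2).
Proof.
  intros Hg. rewrite !pref_response by auto.
  set (g := gamma b) in *.
  pose proof (response_lipschitz (e1 * g) (e2 * g)) as H.
  replace (e1 * g - e2 * g) with ((e1 - e2) * g) in H by ring.
  rewrite Rabs_mult, (Rabs_pos_eq g) in H by lra.
  replace (response al be ka (e1 * g) / g - response al be ka (e2 * g) / g)
    with ((response al be ka (e1 * g) - response al be ka (e2 * g)) * / g) by (field; lra).
  rewrite Rabs_mult, (Rabs_pos_eq (/ g)) by (apply Rlt_le, Rinv_0_lt_compat; lra).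
  apply Rmult_le_reg_r with (r := g); [lra |].
  replace (_ * / g * g) with (Rabs (response al be ka (e1 * g) - response al be ka (e2 * g)))
    by (field; lra).
  lra.
Qed.

Lemma pref_saturated eta (gamma : nat -> R) b :
  be / (ka * gamma b) <= eta -> pref al be ka eta gamma b = be / gamma b.
Proof. intros H. unfold pref. cbv zeta. destruct Rle_dec; [reflexivity | contradiction]. Qed.

Lemma pref_nonpos_level eta (gamma : nat -> R) b : 0 < gamma b -> eta <= 0 ->
  pref al be ka eta gamma b = 0.
Proof.
  intros Hg He. rewrite pref_response, response_nonpos_level by (auto; nra).
  unfold Rdiv. ring.
Qed.

Lemma pref_nonneg eta (gamma : nat -> R) b : 0 < gamma b -> 0 <= pref al be ka eta gamma b.
Proof.
  intros Hg. rewrite pref_response by auto.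
  apply Rmult_le_pos; [apply response_nonneg | apply Rlt_le, Rinv_0_lt_compat; lra].
Qed.

End Allocation.

Lemma band_tangent_bound al be ka a eta (gamma : nat -> R) b q :
  0 < al -> al < be -> 0 < ka ->
  ka * log2 al + a = log2 (1 + al) -> ka * (1 + al) <= al ->
  0 < gamma b -> 0 < eta -> 0 <= q ->
  Iref al be ka a (q * gamma b)
    <= Iref al be ka a (pref al be ka eta gamma b * gamma b)
       + / (eta * ln 2) * (q - pref al be ka eta gamma b).
Proof.
  intros Hal Hab Hka Ha Hsl Hg He Hq. pose proof ln2_pos as Hln2.
  rewrite pref_response by auto.
  set (g := gamma b) in *. set (y := response al be ka (eta * g)).
  replace (y / g * g) with y by (field; lra).
  pose proof (response_supergradient al be ka a Hal Hab Hka Ha Hsl (eta * g)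
                ltac:(nra) (q * g) ltac:(nra)) as H.
  fold y in H. unfold nat_rate in H.
  apply Rmult_le_reg_l with (r := ln 2); [lra |].
  replace (ln 2 * (Iref al be ka a y + / (eta * ln 2) * (q - y / g)))
    with (ln 2 * Iref al be ka a y + / (eta * g) * (q * g - y)) by (field; lra).
  exact H.
Qed.

Lemma sumB_le n f g : (forall b, (b < n)%nat -> f b <= g b) -> sumB n f <= sumB n g.
Proof.
  induction n; intros H; simpl; [lra |].
  apply Rplus_le_compat; [apply IHn; intros; apply H; lia | apply H; lia].
Qed.

Lemma sumB_ext n f g : (forall b, (b < n)%nat -> f b = g b) -> sumB n f = sumB n g.
Proof.
  induction n; intros H; simpl; [lra |].
  rewrite IHn by (intros; apply H; lia). rewrite H by lia. reflexivity.
Qed.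

Lemma sumB_zero n : sumB n (fun _ => 0) = 0.
Proof. induction n; simpl; [| rewrite IHn]; ring. Qed.

Lemma sumB_lin n f g h K :
  sumB n (fun b => f b + K * (g b - h b)) = sumB n f + K * (sumB n g - sumB n h).
Proof. induction n; simpl; [| rewrite IHn]; ring. Qed.

Lemma sumB_nonneg n f : (forall b, (b < n)%nat -> 0 <= f b) -> 0 <= sumB n f.
Proof.
  intros H. rewrite <- (sumB_zero n). apply sumB_le. exact H.
Qed.

Lemma sumB_ge_term n f : (forall b, (b < n)%nat -> 0 <= f b) ->
  forall b, (b < n)%nat -> f b <= sumB n f.
Proof.
  induction n; intros H b Hb; [lia |]. simpl.
  assert (0 <= f n) by (apply H; lia).
  destruct (Nat.eq_dec b n) as [-> | Hne].
  - assert (0 <= sumB n f) by (apply sumB_nonneg; intros; apply H; lia). lra.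
  - assert (f b <= sumB n f) by (apply IHn; [intros; apply H; lia | lia]). lra.
Qed.

Lemma sumB_lagrange n (u v p q : nat -> R) K : 0 <= K ->
  (forall b, (b < n)%nat -> u b <= v b + K * (q b - p b)) ->
  sumB n q <= sumB n p -> sumB n u <= sumB n v.
Proof.
  intros HK Hb Hsum.
  eapply Rle_trans; [apply (sumB_le n u (fun b => v b + K * (q b - p b))); exact Hb |].
  rewrite sumB_lin. nra.
Qed.

Lemma lipschitz_continuity f L : 0 <= L ->
  (forall x y, Rabs (f x - f y) <= L * Rabs (x - y)) -> continuity f.
Proof.
  intros HL Hf x eps Heps. exists (eps / (L + 1)). split.
  - apply Rdiv_lt_0_compat; lra.
  - intros y [_ Hy]. simpl in *. unfold R_dist in *.
    assert (Hd : 0 <= Rabs (y - x)) by apply Rabs_pos.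
    assert (Rabs (y - x) * (L + 1) < eps).
    { apply Rmult_lt_compat_r with (r := L + 1) in Hy; [| lra].
      replace (eps / (L + 1) * (L + 1)) with eps in Hy by (field; lra). lra. }
    specialize (Hf y x). nra.
Qed.

Lemma continuity_sumB n (F : R -> nat -> R) :
  (forall b, (b < n)%nat -> continuity (fun x => F x b)) ->
  continuity (fun x => sumB n (F x)).
Proof.
  induction n; intros H; simpl.
  - apply continuity_const. intros x y. reflexivity.
  - apply (continuity_plus (fun x => sumB n (F x)) (fun x => F x n)).
    + apply IHn. intros; apply H; lia.
    + apply H; lia.
Qed.

Section WaterFilling.
Variables (B : nat) (gamma : nat -> R) (P al be ka a : R).
Hypothesis Hgamma : forall b, (b < B)%nat -> 0 < gamma b.
Hypothesis Hal : 0 < al.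
Hypothesis Hab : al < be.
Hypothesis Hka : 0 < ka.
Hypothesis Ha : ka * log2 al + a = log2 (1 + al).
Hypothesis Hslope : ka * (1 + al) <= al.

Let total_power (eta : R) : R := sumB B (pref al be ka eta gamma).

Lemma saturation_solution : sumB B (fun b => be / gamma b) <= INR B * P ->
  is_solution B P al be ka a gamma (fun b => be / gamma b).
Proof.
  intros Hsum. split.
  - split; [| exact Hsum].
    intros b Hb. apply Rlt_le, Rdiv_lt_0_compat; [lra | auto].
  - intros q [Hq _]. unfold objective. apply sumB_le. intros b Hb.
    pose proof (Hgamma b Hb). pose proof (Hq b Hb). pose proof ln2_pos.
    replace (be / gamma b * gamma b) with be by (field; lra).
    apply Rmult_le_reg_l with (r := ln 2); [lra |].
    apply (rate_le_top al be ka a); auto. nra.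
Qed.

Lemma water_level_solution eta : 0 < eta -> total_power eta = INR B * P ->
  is_solution B P al be ka a gamma (pref al be ka eta gamma).
Proof.
  intros He Hsum. pose proof ln2_pos.
  assert (Hfeas : feasible B P (pref al be ka eta gamma)).
  { split; [intros b Hb; apply pref_nonneg; auto | unfold total_power in Hsum; lra]. }
  split; [exact Hfeas |].
  intros q [Hq Hqsum]. unfold objective.
  apply (sumB_lagrange B _ _ (pref al be ka eta gamma) q (/ (eta * ln 2))).
  - apply Rlt_le, Rinv_0_lt_compat. nra.
  - intros b Hb. apply band_tangent_bound; auto.
  - unfold total_power in Hsum. lra.
Qed.

Lemma water_level_exists : 0 <= INR B * P <= sumB B (fun b => be / gamma b) ->
  exists eta, total_power eta = INR B * P.
Proof.
  intros Hbud.
  set (eta_sat := sumB B (fun b => be / (ka * gamma b))).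
  assert (Hsat : forall b, (b < B)%nat -> 0 <= be / (ka * gamma b)).
  { intros b Hb. pose proof (Hgamma b Hb). apply Rlt_le, Rdiv_lt_0_compat; nra. }
  assert (Hzero : total_power 0 = 0).
  { transitivity (sumB B (fun _ => 0)); [| apply sumB_zero].
    apply sumB_ext. intros b Hb. apply pref_nonpos_level; auto; lra. }
  assert (Hfull : total_power eta_sat = sumB B (fun b => be / gamma b)).
  { apply sumB_ext. intros b Hb. apply pref_saturated.
    apply (sumB_ge_term B (fun b => be / (ka * gamma b))); auto. }
  assert (Hcont : continuity (fun eta => total_power eta - INR B * P)).
  { apply (continuity_minus total_power (fun _ => INR B * P)).
    - apply (continuity_sumB B (fun eta b => pref al be ka eta gamma b)).
      intros b Hb. apply (lipschitz_continuity _ (1 + ka)); [lra |].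
      intros x y. apply pref_lipschitz; auto.
    - apply continuity_const. intros x y; reflexivity. }
  destruct (IVT_cor _ 0 eta_sat Hcont) as [eta [_ Heta]].
  - apply sumB_nonneg. exact Hsat.
  - rewrite Hzero, Hfull. nra.
  - exists eta. lra.
Qed.

Lemma water_level_pos eta : 0 < total_power eta -> 0 < eta.
Proof.
  intros Hpos. destruct (Rlt_le_dec 0 eta) as [He | He]; auto.
  exfalso. assert (total_power eta = 0); [| lra].
  rewrite <- (sumB_zero B). apply sumB_ext. intros b Hb.
  apply pref_nonpos_level; auto.
Qed.

End WaterFilling.

Theorem theorem3 (B : nat) (gamma : nat -> R) (P alpha beta kappa a : R)
  (HB : (0 < B)%nat)
  (Hgamma : forall b, (b < B)%nat -> 0 < gamma b)
  (HP : 0 < P)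
  (Halpha : 0 < alpha) (Hab : alpha < beta) (Hkappa : 0 < kappa)
  (Ha : kappa * log2 alpha + a = log2 (1 + alpha))
  (Hslope : kappa * (1 + alpha) <= alpha) :
  (/ INR B * sumB B (fun b => beta / gamma b) < P ->
     is_solution B P alpha beta kappa a gamma (fun b => beta / gamma b)) /\
  (P <= / INR B * sumB B (fun b => beta / gamma b) ->
     (exists eta, / INR B * sumB B (pref alpha beta kappa eta gamma) = P) /\
     (forall eta, / INR B * sumB B (pref alpha beta kappa eta gamma) = P ->
        is_solution B P alpha beta kappa a gamma (pref alpha beta kappa eta gamma))).
Proof.
  assert (HBpos : 0 < INR B) by (apply lt_0_INR; exact HB).
  assert (Hscale : forall S, S = INR B * (/ INR B * S)) by (intros; field; lra).
  split; intros Havg.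
  - apply saturation_solution; auto.
    rewrite (Hscale (sumB B _)). nra.
  - split.
    + destruct (water_level_exists B gamma P alpha beta kappa) as [eta Heta]; auto.
      * split; [nra |]. rewrite (Hscale (sumB B _)). nra.
      * exists eta. rewrite Heta. field. lra.
    + intros eta Hlevel.
      assert (Hsum : sumB B (pref alpha beta kappa eta gamma) = INR B * P).
      { rewrite (Hscale (sumB B _)), Hlevel. reflexivity. }
      apply water_level_solution; auto.
      apply (water_level_pos B gamma alpha beta kappa); auto.
      rewrite Hsum. nra.
Qed.
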